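(* Let $n>1$, $\rho>0$ and $c>0$, and let $\mathrm{ad}(B_1^R)^*$ denote the adjoint of $\mathrm{ad}(B_1^R)$ with respect to the inner product $g_\rho^c$ on $\mathfrak{l}$. Then $[\mathrm{ad}(B_1^R),\mathrm{ad}(B_1^R)^*]\neq0$.
   Context: Fix $n\ge 2$, $\rho>0$, $c\ge0$. The real Lie algebra $\mathfrak{l}$ has basis $B_a^R,B_a^I$ ($a=1,\dots,n-1$), $e_k,f_k$ ($k=0,\dots,n-1$), $Z$. Brackets (unlisted brackets of basis elements, up to antisymmetry, are zero): $[B_1^R,B_1^I]=2B_1^I$; for $a\in\{2,\dots,n-1\}$: $[B_1^R,B_a^R]=B_a^R$, $[B_1^R,B_a^I]=B_a^I$, $[B_a^R,B_a^I]=\tfrac12B_1^I$; $[e_0,f_0]=Z$, $[e_a,f_a]=-Z$ ($a\ge1$); $[B,Z]=0$. Mixed brackets after complex-bilinear extension, $E_k:=e_k-if_k$, $[B,\bar E_k]=\overline{[B,E_k]}$ for real $B$: for $a\ge2$, $[B_1^R,E_k]=-\delta_{k0}E_1-\delta_{k1}E_0$, $[B_a^R,E_k]=-\tfrac12(\delta_{k0}+\delta_{k1})E_a-\tfrac12\delta_{ka}(E_0-E_1)$, $[B_1^I,E_k]=-i(\delta_{k0}+\delta_{k1})(E_0-E_1)$, $[B_a^I,E_k]=\tfrac{i}{2}(\delta_{k0}+\delta_{k1})E_a-\tfrac{i}{2}\delta_{ka}(E_0-E_1)$. Inner product $g_\rho^c$: $g(B_1^R,B_1^R)=\frac{\rho+c}{\rho}$,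 $g(B_1^I,B_1^I)=\frac{(\rho+c)^3}{\rho^2(\rho+2c)}$, $g(B_a^R,B_a^R)=g(B_a^I,B_a^I)=\frac{\rho+c}{4\rho}$ ($a\ge2$), $g(e_0,e_0)=g(f_0,f_0)=\frac{\rho+2c}{4\rho^2}$, $g(e_a,e_a)=g(f_a,f_a)=\frac1{4\rho}$ ($a\ge1$), $g(Z,Z)=\frac{\rho+c}{4\rho^2(\rho+2c)}$, $g(B_1^I,Z)=-\frac{c(\rho+c)}{2\rho^2(\rho+2c)}$, all other distinct basis pairs orthogonal. *)

From HB Require Import structures.
From mathcomp Require Import all_boot all_order all_algebra.
Set Implicit Arguments. Unset Strict Implicit. Unset Printing Implicit Defensive.
Import Order.TTheory GRing.Theory Num.Theory.
Local Open Scope ring_scope.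

(* Basis index of the real Lie algebra l (dimension 4n-1):
   inl (inl (false, a)) = B^R_{a+1},  inl (inl (true, a)) = B^I_{a+1}   (a : 'I_(n-1))
   inl (inr (false, k)) = e_k,        inl (inr (true, k)) = f_k         (k : 'I_n)
   inr tt               = Z                                                          *)
Notation lidx n := ((bool * 'I_(n.-1)) + (bool * 'I_n) + unit)%type.

Notation lvec R n := {ffun lidx n -> R^o}.

Section LieAlg.
Variables (R : realFieldType) (n : nat).

Definition lbasis (i : lidx n) : lvec R n := [ffun j => (j == i)%:R].
Definition vBR (a : 'I_(n.-1)) := lbasis (inl (inl (false, a))).
Definition vBI (a : 'I_(n.-1)) := lbasis (inl (inl (true, a))).
Definition ve (k : 'I_n) := lbasis (inl (inr (false, k))).
Definition vf (k : 'I_n) := lbasis (inl (inr (true, k))).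
Definition vZ := lbasis (inr tt).

(* B_1^R and B_1^I as vectors (avoid building the ordinal 0 : 'I_(n-1)) *)
Definition vB1R : lvec R n :=
  [ffun j => match j with inl (inl (false, a)) => (val a == 0%N)%:R | _ => 0 end].
Definition vB1I : lvec R n :=
  [ffun j => match j with inl (inl (true, a)) => (val a == 0%N)%:R | _ => 0 end].

Definition dlt (x y : nat) : R := (x == y)%:R.

(* A complex combination  sum_j (p j + i q j) E_j  with E_j = e_j - i f_j.
   Its real part is sum_j (p j e_j + q j f_j), its imaginary part is
   sum_j (q j e_j - p j f_j).  For real B:  [B,e_k] = Re [B,E_k],
   [B,f_k] = - Im [B,E_k]. *)
Definition reE (p q : 'I_n -> R) : lvec R n := \sum_j (p j *: ve j + q j *: vf j).
Definition negimE (p q : 'I_n -> R) : lvec R n := \sum_j (p j *: vf j - q j *: ve j).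

(* coefficients (p j, q j) of [B, E_k] on E_j, for B = B^R_{a+1} (b = false)
   or B = B^I_{a+1} (b = true); the label of B is (val a).+1 *)
Definition Ecoef (b : bool) (a : 'I_(n.-1)) (k j : 'I_n) : R * R :=
  let la := (val a).+1 in
  let s01 := dlt k 0 + dlt k 1 in
  let d01 := dlt j 0 - dlt j 1 in
  if la == 1%N then
    (if ~~ b then
       (* [B_1^R, E_k] = - d_{k0} E_1 - d_{k1} E_0 *)
       (- (dlt k 0 * dlt j 1 + dlt k 1 * dlt j 0), 0)
     else
       (* [B_1^I, E_k] = -i (d_{k0}+d_{k1}) (E_0 - E_1) *)
       (0, - (s01 * d01)))
  else
    (if ~~ b then
       (* [B_a^R, E_k] = -1/2 (d_{k0}+d_{k1}) E_a - 1/2 d_{ka} (E_0 - E_1) *)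
       (- (1/2) * s01 * dlt j la - (1/2) * dlt k la * d01, 0)
     else
       (* [B_a^I, E_k] = i/2 (d_{k0}+d_{k1}) E_a - i/2 d_{ka} (E_0 - E_1) *)
       (0, (1/2) * s01 * dlt j la - (1/2) * dlt k la * d01)).

(* the listed brackets of basis elements, one orientation each *)
Definition lbr_listed (i j : lidx n) : lvec R n :=
  match i, j with
  | inl (inl (false, a)), inl (inl (bj, b)) =>
      if val a == 0%N then
        (if val b == 0%N then (if bj then 2 *: vB1I else 0)
         else (if bj then vBI b else vBR b))
      else
        (if bj && (a == b) then (1/2) *: vB1I else 0)
  | inl (inl (b, a)), inl (inr (false, k)) =>
      reE (fun j => (Ecoef b a k j).1) (fun j => (Ecoef b a k j).2)
  | inl (inl (b, a)), inl (inr (true, k)) =>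
      negimE (fun j => (Ecoef b a k j).1) (fun j => (Ecoef b a k j).2)
  | inl (inr (false, k)), inl (inr (true, l)) =>
      if k == l then (if val k == 0%N then vZ else - vZ) else 0
  | _, _ => 0
  end.

Definition lbr_basis (i j : lidx n) : lvec R n := lbr_listed i j - lbr_listed j i.

Definition lbr (x y : lvec R n) : lvec R n :=
  \sum_i \sum_j (x i * y j) *: lbr_basis i j.

Definition ad (x : lvec R n) : lvec R n -> lvec R n := lbr x.

Definition gram (rho c : R) (i j : lidx n) : R :=
  match i, j with
  | inl (inl (false, a)), inl (inl (false, b)) =>
      if a == b then (if val a == 0%N then (rho + c) / rho else (rho + c) / (4 * rho))
      else 0
  | inl (inl (true, a)), inl (inl (true, b)) =>
      if a == b then
        (if val a == 0%N then (rho + c) ^+ 3 / (rho ^+ 2 * (rho + 2 * c))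
         else (rho + c) / (4 * rho))
      else 0
  | inl (inr (b1, k)), inl (inr (b2, l)) =>
      if (b1 == b2) && (k == l) then
        (if val k == 0%N then (rho + 2 * c) / (4 * rho ^+ 2) else 1 / (4 * rho))
      else 0
  | inr tt, inr tt => (rho + c) / (4 * rho ^+ 2 * (rho + 2 * c))
  | inl (inl (true, a)), inr tt | inr tt, inl (inl (true, a)) =>
      if val a == 0%N then - (c * (rho + c)) / (2 * rho ^+ 2 * (rho + 2 * c)) else 0
  | _, _ => 0
  end.

Definition g (rho c : R) (x y : lvec R n) : R :=
  \sum_i \sum_j x i * y j * gram rho c i j.

End LieAlg.

From HB Require Import structures.
From mathcomp Require Import all_boot all_order all_algebra.
Set Implicit Arguments. Unset Strict Implicit. Unset Printing Implicit Defensive.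
Import Order.TTheory GRing.Theory Num.Theory.
Local Open Scope ring_scope.

(* Let A := ad B_1^R, S its g-adjoint, w := S Z, and suppose A w = S (A Z).
   As Z is central and A B_1^I = 2 B_1^I, adjointness gives g(B_1^I, A w) = g(A B_1^I, A Z) = 0,
   g(B_1^I, w) = g(A B_1^I, Z) = 2 g(B_1^I, Z) and g(Z, w) = g(A Z, Z) = 0.  The functionals
   g(B_1^I, .) and g(Z, .) only see the B_1^I- and Z-coordinates, on which A acts by 2 and 0,
   so the three identities form a linear system in these two coordinates of w.  For c > 0
   the entry g(B_1^I, Z) is nonzero, and the system forces w = 2 Z on these coordinates and
   then g(Z, Z) = 0, which is absurd. *)

Lemma sum_only2 (V : nmodType) (I : finType) (i1 i2 : I) (F : I -> V) :
  i1 != i2 -> (forall j, j != i1 -> j != i2 -> F j = 0) ->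
  \sum_j F j = F i1 + F i2.
Proof.
move=> i12 F0; rewrite (bigD1 i1) //= (bigD1 i2) 1?eq_sym //= big1 ?addr0 //.
by move=> j /andP[j1 j2]; apply: F0.
Qed.

Section Coordinates.
Variables (R : realFieldType) (n : nat) (rho c : R).

Lemma gram_sym (i j : lidx n) : gram rho c i j = gram rho c j i.
Proof.
rewrite /gram; case: i j => [[[[] a]|[[] k]]|[]] [[[[] b]|[[] l]]|[]] //=;
  by case: eqVneq => [->|].
Qed.

Lemma g_sym (x y : lvec R n) : g rho c x y = g rho c y x.
Proof.
rewrite /g exchange_big; apply: eq_bigr => i _; apply: eq_bigr => j _.
by rewrite gram_sym [x j * _]mulrC.
Qed.

Lemma g_lbasisl i (y : lvec R n) :
  g rho c (lbasis R i) y = \sum_j y j * gram rho c i j.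
Proof.
rewrite /g (bigD1 i) //= [X in _ + X]big1 ?addr0 => [|i' i'i].
  by apply: eq_bigr => j _; rewrite ffunE eqxx mul1r.
by apply: big1 => j _; rewrite ffunE (negPf i'i) !mul0r.
Qed.

Lemma g0l (y : lvec R n) : g rho c 0 y = 0.
Proof. by rewrite /g big1 // => i _; rewrite big1 // => j _; rewrite ffunE !mul0r. Qed.

Lemma g0r (x : lvec R n) : g rho c x 0 = 0.
Proof. by rewrite g_sym g0l. Qed.

Lemma lbr_lbasisl i (y : lvec R n) :
  lbr (lbasis R i) y = \sum_j y j *: lbr_basis R i j.
Proof.
rewrite /lbr (bigD1 i) //= [X in _ + X]big1 ?addr0 => [|i' i'i].
  by apply: eq_bigr => j _; rewrite ffunE eqxx mul1r.
by apply: big1 => j _; rewrite ffunE (negPf i'i) mul0r scale0r.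
Qed.

Definition is_ef_idx (i : lidx n) := if i is inl (inr _) then true else false.

Lemma reE_out_ef (p q : 'I_n -> R) i : ~~ is_ef_idx i -> reE p q i = 0.
Proof.
move=> i_ef; rewrite /reE sum_ffunE big1 // => j _.
by case: i i_ef => [[x|x]|[]] //= _; rewrite !ffunE /= !scaler0 addr0.
Qed.

Lemma negimE_out_ef (p q : 'I_n -> R) i : ~~ is_ef_idx i -> negimE p q i = 0.
Proof.
move=> i_ef; rewrite /negimE sum_ffunE big1 // => j _.
by case: i i_ef => [[x|x]|[]] //= _; rewrite !ffunE /= !scaler0 subr0.
Qed.

End Coordinates.

Section B1R_block.
Variables (R : realFieldType) (m : nat).

Definition iB1R : lidx m.+2 := inl (inl (false, ord0)).
Definition iB1I : lidx m.+2 := inl (inl (true, ord0)).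
Definition iZ : lidx m.+2 := inr tt.
Local Notation B1R := (vB1R R m.+2).

Lemma vB1R_lbasis : B1R = lbasis R iB1R.
Proof. by apply/ffunP => -[[[[] a]|[[] k]]|[]]; rewrite !ffunE. Qed.

Lemma ad_B1RE (w : lvec R m.+2) k :
  ad B1R w k = \sum_j w j * lbr_basis R iB1R j k.
Proof.
by rewrite /ad vB1R_lbasis lbr_lbasisl sum_ffunE; apply: eq_bigr => j _; rewrite ffunE.
Qed.

(* After [/=] the index type reads ['I_m.+1], from which [n] cannot be recovered as
   [n.-1]: hence the explicit [n := m.+2]. *)
Lemma lbr_basis_B1R_B1I j : lbr_basis R iB1R j iB1I = (j == iB1I)%:R * 2.
Proof.
rewrite /lbr_basis ffunE.
case: j => [[[[] [[|a] ha]]|[[] k]]|[]] /=;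
  rewrite !ffunE /= ?(reE_out_ef (n := m.+2)) ?(negimE_out_ef (n := m.+2)) //=.
all: by rewrite subr0 ?mul0r // mul1r [LHS]mulr1.
Qed.

Lemma lbr_basis_B1R_Z j : lbr_basis R iB1R j iZ = 0.
Proof.
rewrite /lbr_basis ffunE.
case: j => [[[[] [[|a] ha]]|[[] k]]|[]] /=;
  rewrite !ffunE /= ?(reE_out_ef (n := m.+2)) ?(negimE_out_ef (n := m.+2)) //=.
all: by rewrite subr0 ?scaler0.
Qed.

Lemma ad_B1R_coord_B1I (w : lvec R m.+2) : ad B1R w iB1I = w iB1I * 2.
Proof.
rewrite ad_B1RE (big_only1 iB1I) // => [|j /negPf j_B1I _];
  by rewrite lbr_basis_B1R_B1I ?eqxx ?mul1r // j_B1I mul0r mulr0.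
Qed.

Lemma ad_B1R_coord_Z (w : lvec R m.+2) : ad B1R w iZ = 0.
Proof. by rewrite ad_B1RE big1 // => j _; rewrite lbr_basis_B1R_Z mulr0. Qed.

Lemma ad_B1R_Z : ad B1R (vZ R m.+2) = 0.
Proof.
apply/ffunP => k; rewrite ad_B1RE ffunE (big_only1 iZ) // => [|j j_Z _].
  by rewrite /lbr_basis /= subr0 !ffunE mulr0.
by rewrite ffunE (negPf j_Z) mul0r.
Qed.

Variables (rho c : R).

Lemma gram_block_out i j : (i == iB1I) || (i == iZ) ->
  j != iB1I -> j != iZ -> gram rho c i j = 0.
Proof.
case/orP=> /eqP ->; case: j => [[[[] [[|a] ha]]|[[] k]]|[]] //=.
Qed.

Lemma g_block_lbasisl i (y : lvec R m.+2) : (i == iB1I) || (i == iZ) ->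
  g rho c (lbasis R i) y = y iB1I * gram rho c i iB1I + y iZ * gram rho c i iZ.
Proof.
move=> i_block; rewrite g_lbasisl (sum_only2 _ (i1 := iB1I) (i2 := iZ)) // => j j1 j2.
by rewrite gram_block_out ?mulr0.
Qed.

Hypotheses (rho_gt0 : 0 < rho) (c_gt0 : 0 < c).

Let rc_gt0 : 0 < rho + c. Proof. exact: addr_gt0. Qed.
Let r2c_gt0 : 0 < rho + 2 * c. Proof. by rewrite addr_gt0 ?mulr_gt0. Qed.

Lemma gram_B1I_B1I_neq0 : gram rho c iB1I iB1I != 0.
Proof. by rewrite /gram /= gt_eqF // divr_gt0 ?mulr_gt0 ?exprn_gt0. Qed.

Lemma gram_Z_Z_neq0 : gram rho c iZ iZ != 0.
Proof. by rewrite /gram /= gt_eqF // divr_gt0 ?mulr_gt0 ?exprn_gt0. Qed.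

Lemma gram_B1I_Z_neq0 : gram rho c iB1I iZ != 0.
Proof. by rewrite /gram /= lt_eqF // mulNr oppr_lt0 divr_gt0 ?mulr_gt0 ?exprn_gt0. Qed.

End B1R_block.

Theorem lemma4p14 (R : realFieldType) (n : nat) (rho c : R) :
  (1 < n)%N -> 0 < rho -> 0 < c ->
  forall S : lvec R n -> lvec R n,
    (forall x y : lvec R n,
        g rho c (ad (vB1R R n) x) y = g rho c x (S y)) ->
    exists v : lvec R n, ad (vB1R R n) (S v) - S (ad (vB1R R n) v) != 0.
Proof.
case: n => [|[|m]] // _ rho_gt0 c_gt0 S S_adj.
set A := ad (vB1R R m.+2) in S_adj *.
pose b := lbasis R (iB1I m); pose z := lbasis R (iZ m).
exists z; rewrite subr_eq0; apply/negP => /eqP AS_SA.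
have Az0 : A z = 0 by exact: ad_B1R_Z.
set w := S z in AS_SA.
have gb_Aw : g rho c b (A w) = 0 by rewrite AS_SA -S_adj Az0 g0r.
have gb_w : g rho c b w = g rho c z (A b) by rewrite -S_adj g_sym.
have gz_w : g rho c z w = 0 by rewrite -S_adj Az0 g0l.
rewrite !g_block_lbasisl ?eqxx ?orbT // in gb_Aw gb_w gz_w.
rewrite !ad_B1R_coord_B1I !ad_B1R_coord_Z /b ffunE eqxx mulr1n !mul0r !addr0 in gb_Aw gb_w.
have wB0 : w (iB1I m) = 0.
  move/eqP: gb_Aw; rewrite mulf_eq0 (negPf (gram_B1I_B1I_neq0 m rho_gt0 c_gt0)).
  by rewrite orbF mulf_eq0 pnatr_eq0 orbF => /eqP.
have wZ2 : w (iZ m) = 2.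
  apply: (mulIf (gram_B1I_Z_neq0 m rho_gt0 c_gt0)).
  by rewrite [gram _ _ (iZ m) _]gram_sym mul1r in gb_w; rewrite -gb_w wB0 mul0r add0r.
move/eqP: gz_w; rewrite wB0 wZ2 mul0r add0r mulf_eq0 pnatr_eq0 /=.
exact/negP/gram_Z_Z_neq0.
Qed.
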